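(* Let $f:2^V\to\mathbb{R}_+$ be nonnegative and let $g:2^V\to\mathbb{R}$ be defined by $g(S)=f(S)-f(\emptyset)$ for all $S\subseteq V$. Then: (i) $f(T)/f(S)\le g(T)/g(S)$ for all $S,T\subseteq V$ with $f(S)\le f(T)$ (whenever these quotients are defined); (ii) $g$ is nonnegative and monotone if $f$ is monotone; (iii) $g$ is supermodular if $f$ is supermodular; (iv) $g$ is $r$-decomposable if $f$ is monotone, supermodular and $r$-decomposable.
   Context: $V$ is a finite set. Supermodular: $h(A)+h(B)\le h(A\cup B)+h(A\cap B)$ for all $A,B$; monotone: $h(B)\le h(A)$ for $B\subseteq A$. A function $h$ on $2^V$ is $r$-decomposable if there exist subsets $V_1,\dots,V_m\subseteq V$ with $|V_i|\le r$ and nonnegative supermodular functions $h_i:2^{V_i}\to\mathbb{R}_+$ such that $h(S)=\sum_{i=1}^m h_i(S\cap V_i)$ for all $S\subseteq V$. *)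

From mathcomp Require Import all_boot all_order all_algebra.
Set Implicit Arguments. Unset Strict Implicit. Unset Printing Implicit Defensive.
Import Order.TTheory GRing.Theory Num.Theory.
Local Open Scope ring_scope.

Definition nonneg_setfun (V : finType) (R : realFieldType) (h : {set V} -> R) :=
  forall S : {set V}, 0 <= h S.

Definition monotone_setfun (V : finType) (R : realFieldType) (h : {set V} -> R) :=
  forall A B : {set V}, B \subset A -> h B <= h A.

Definition supermodular (V : finType) (R : realFieldType) (h : {set V} -> R) :=
  forall A B : {set V}, h A + h B <= h (A :|: B) + h (A :&: B).

(* r-decomposable: h S = \sum_i h_i (S \cap V_i), |V_i| <= r, each h_i a
   nonnegative supermodular function on 2^{V_i} (modelled as a function on
   {set V} of which only the values on subsets of V_i matter). *)
Definition decomposable (V : finType) (R : realFieldType) (r : nat)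
    (h : {set V} -> R) :=
  exists (m : nat) (Vs : 'I_m -> {set V}) (hs : 'I_m -> {set V} -> R),
    [/\ forall i, (#|Vs i| <= r)%N,
        forall i (A : {set V}), A \subset Vs i -> 0 <= hs i A,
        forall i (A B : {set V}), A \subset Vs i -> B \subset Vs i ->
          hs i A + hs i B <= hs i (A :|: B) + hs i (A :&: B)
      & forall S : {set V}, h S = \sum_(i < m) hs i (S :&: Vs i)].

(** The ratio inequality (i) is cross-multiplication. For (iv), write
    [f S = \sum_i h_i (S :&: V_i)] and [g = f - f set0]. The functions
    [h_i - h_i set0] sum to [g] and are supermodular, but need not be
    nonnegative. Supermodularity makes [h_i A - h_i set0] dominate the sum of
    the singleton marginals [h_i [set v] - h_i set0] over [v \in A], so moving
    these marginals around between the parts by modular corrections keeps the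
    total fixed and supermodularity intact. Each [v] is handed to one part
    containing it (chosen by [pick]), which receives the whole marginal
    [g [set v]] of [v]; this is nonnegative when [f] is monotone, and it makes
    every part nonnegative. *)

From mathcomp Require Import all_boot all_order all_algebra.
From mathcomp Require Import lra.
Import Order.TTheory GRing.Theory Num.Theory.
Local Open Scope ring_scope.

Lemma ler_ratio_subr (R : realFieldType) (a b c : R) :
  0 <= c -> a <= b -> 0 < a - c -> b / a <= (b - c) / (a - c).
Proof.
move=> c_ge0 le_ab ac_gt0.
have a_gt0 : 0 < a by lra.
rewrite ler_pdivlMr // mulrAC ler_pdivrMr //.
have : 0 <= c * (b - a) by rewrite mulr_ge0 ?subr_ge0.
lra.
Qed.

Lemma sumr_setUI {T : finType} {M : nmodType} (F : T -> M) (A B : {set T}) :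
  \sum_(v in A :|: B) F v + \sum_(v in A :&: B) F v =
  \sum_(v in A) F v + \sum_(v in B) F v.
Proof.
rewrite (big_setID A) setUK setDUl setDv set0U (big_setID (A := B) A) /=.
by rewrite setIC addrAC addrA.
Qed.

Definition supermodular_on {T : finType} {R : realFieldType} (W : {set T})
    (h : {set T} -> R) :=
  forall A B : {set T}, A \subset W -> B \subset W ->
    h A + h B <= h (A :|: B) + h (A :&: B).

Section SupermodularOn.

Context {T : finType} {R : realFieldType} {W : {set T}}.

Lemma supermodular_onD_sum (h : {set T} -> R) (k : R) (c : T -> R) :
  supermodular_on W h ->
  supermodular_on W (fun A => h A - k + \sum_(v in A) c v).
Proof.
move=> h_sup A B AW BW; have := h_sup A B AW BW.
have := sumr_setUI c A B; lra.
Qed.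

Lemma supermodular_on_sum_set1 (h : {set T} -> R) (A : {set T}) :
  supermodular_on W h -> A \subset W ->
  \sum_(v in A) (h [set v] - h set0) <= h A - h set0.
Proof.
move=> h_sup; have [n] := ubnP #|A|; elim: n A => // n IH A /ltnSE leAn AW.
have [-> | [v vA]] := set_0Vmem A; first by rewrite big_set0 subrr.
have AvW : A :\ v \subset W by apply: subset_trans AW; apply: subD1set.
have vW : [set v] \subset W by rewrite sub1set (subsetP AW).
have ltAvn : (#|A :\ v| < n)%N by rewrite (cardsD1 v A) vA in leAn.
have Av_v0 : (A :\ v) :&: [set v] = set0.
  by apply/setP => x; rewrite !inE; case: (x =P v); rewrite ?andbF.
have := h_sup _ _ AvW vW; rewrite setUC setD1K // Av_v0.
have := IH _ ltAvn AvW; rewrite (big_setD1 v vA) /=; lra.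
Qed.

End SupermodularOn.

Section Normalization.

Context {V : finType} {R : realFieldType} {m : nat}.
Variables (Vs : 'I_m -> {set V}) (hs : 'I_m -> {set V} -> R).

Definition marginal (i : 'I_m) (v : V) : R :=
  hs i ([set v] :&: Vs i) - hs i set0.

Definition total_marginal (v : V) : R := \sum_(i < m) marginal i v.

Definition transfer (i : 'I_m) (v : V) : R :=
  (if [pick j | v \in Vs j] == Some i then total_marginal v else 0)
  - marginal i v.

Definition normalized_part (i : 'I_m) (A : {set V}) : R :=
  hs i A - hs i set0 + \sum_(v in A) transfer i v.

Lemma marginal_notin i v : v \notin Vs i -> marginal i v = 0.
Proof.
move=> vNi; rewrite /marginal.
suff -> : [set v] :&: Vs i = set0 by rewrite subrr.
by apply/setP => x; rewrite !inE; case: eqP => // ->; rewrite (negbTE vNi).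
Qed.

Lemma transfer_notin i v : v \notin Vs i -> transfer i v = 0.
Proof.
move=> vNi; rewrite /transfer marginal_notin // subr0.
by case: pickP => [j vj | _] //=; case: eqP => // -[ji]; rewrite -ji vj in vNi.
Qed.

Lemma sum_transfer v : \sum_(i < m) transfer i v = 0.
Proof.
rewrite /transfer sumrB -/(total_marginal v); case: pickP => [j vj | vN] /=.
  rewrite (bigD1 j) //= eqxx big1 ?addr0 ?subrr // => i /negbTE neq_ij.
  by case: eqP => // -[ji]; rewrite ji eqxx in neq_ij.
rewrite big1 // sub0r /total_marginal big1 ?oppr0 // => i _.
by rewrite marginal_notin ?vN.
Qed.

Lemma sum_normalized_part S :
  \sum_(i < m) normalized_part i (S :&: Vs i) =
  \sum_(i < m) (hs i (S :&: Vs i) - hs i set0).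
Proof.
rewrite big_split /=.
suff -> : \sum_(i < m) \sum_(v in S :&: Vs i) transfer i v = 0 by rewrite addr0.
transitivity (\sum_(i < m) \sum_(v in S) transfer i v).
  apply: eq_bigr => i _; rewrite [RHS](big_setID (Vs i)) /=.
  rewrite [X in _ = _ + X]big1 ?addr0 // => v.
  by rewrite !inE => /andP[/transfer_notin].
by rewrite exchange_big big1 // => v _; apply: sum_transfer.
Qed.

Lemma normalized_part_ge0 i (A : {set V}) :
  supermodular_on (Vs i) (hs i) -> (forall v, 0 <= total_marginal v) ->
  A \subset Vs i -> 0 <= normalized_part i A.
Proof.
move=> hs_sup tm_ge0 AVi.
have marginal_sum : \sum_(v in A) marginal i v <= hs i A - hs i set0.
  rewrite (eq_bigr (fun v => hs i [set v] - hs i set0)) => [|v vA].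
    exact: supermodular_on_sum_set1 _ _ hs_sup AVi.
  by rewrite /marginal (setIidPl _) // sub1set (subsetP AVi).
have owned_ge0 : 0 <= \sum_(v in A)
    (if [pick j | v \in Vs j] == Some i then total_marginal v else 0).
  by apply: sumr_ge0 => v _; case: ifP.
rewrite /normalized_part /transfer big_split /= sumrN; lra.
Qed.

End Normalization.

Lemma decomposable_sub0 (V : finType) (R : realFieldType) (r : nat)
    (f : {set V} -> R) :
  (forall v, f set0 <= f [set v]) ->
  decomposable r f -> decomposable r (fun S => f S - f set0).
Proof.
move=> f_set1 [m [Vs [hs [Vs_card _ hs_sup f_sum]]]].
have f_set0 : f set0 = \sum_(i < m) hs i set0.
  by rewrite f_sum; apply: eq_bigr => i _; rewrite set0I.
exists m, Vs, (normalized_part Vs hs); split => //.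
- move=> i A; apply: normalized_part_ge0 => [|v]; first exact: hs_sup.
  by rewrite /total_marginal sumrB -f_set0 -f_sum subr_ge0.
- by move=> i; apply/supermodular_onD_sum/hs_sup.
- by move=> S; rewrite sum_normalized_part f_sum f_set0 sumrB.
Qed.

Theorem proposition2 (V : finType) (R : realFieldType) (f : {set V} -> R)
    (f_nonneg : nonneg_setfun f) :
  let g := fun S : {set V} => f S - f set0 in
  [/\ (forall S T : {set V}, f S <= f T -> 0 < g S ->
         f T / f S <= g T / g S),
      (monotone_setfun f -> nonneg_setfun g /\ monotone_setfun g),
      (supermodular f -> supermodular g)
    & forall r : nat, monotone_setfun f -> supermodular f ->
         decomposable r f -> decomposable r g].
Proof.
move=> g; split.
- by move=> S T; apply: ler_ratio_subr; apply: f_nonneg.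
- move=> f_mono; split => [S | A B BA]; last by rewrite /g lerD2r f_mono.
  by rewrite /g subr_ge0 f_mono ?sub0set.
- by move=> f_sup A B; rewrite /g; have := f_sup A B; lra.
- by move=> r f_mono _; apply: decomposable_sub0 => v; rewrite f_mono ?sub0set.
Qed.
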